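(* Let $R>1$ and let $f$ be analytic in a neighborhood of $\Omega_R=\{z\in\mathbb{C}: 1\le |z|\le R,\ \Im z\ge 0\}$. Let $\rho>0$ and suppose that for some constant $C_0>0$, $|f(x)|\le C_0|x|^\rho$ for all $x\in\mathbb{R}\cap\Omega_R$. Set $M=\max_{|z|=1,\, z\in\Omega_R}|f(z)|$ and $$A(R)=\max\Big(C_0R^\rho,\ MR^\rho,\ \max_{z\in\Omega_R}\Re f(z)\Big).$$ Then if $1<r<R$ and $z\in\Omega_R$ with $|z|=r$, we have $|f(z)|\le \frac{2r^\rho}{R^\rho-r^\rho}A(R)$. *)

From Stdlib Require Export Reals.
From Coquelicot Require Export Coquelicot.
Open Scope R_scope.

Definition Omega (Rr : R) (z : C) : Prop :=
  1 <= Cmod z <= Rr /\ 0 <= Im z.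

(* complex differentiability at z (derivative taken with complex scalars) *)
Definition C_differentiable (f : C -> C) (z : C) : Prop :=
  @ex_derive C_AbsRing C_NormedModule f z.

Definition analytic_near (f : C -> C) (S : C -> Prop) : Prop :=
  exists U : C -> Prop, @open C_UniformSpace U /\
    (forall z, S z -> U z) /\ (forall z, U z -> C_differentiable f z).

Definition is_max_on (S : C -> Prop) (g : C -> R) (m : R) : Prop :=
  (exists z0, S z0 /\ g z0 = m) /\ (forall z, S z -> g z <= m).

(* Since [Re f <= A] on the half annulus, [h = f / (2A - f)] satisfies [|h| <= 1] and
   [|h| <= |f| / A], and [|f| <= 2A |h| / (1 - |h|)] recovers [f] from [h].  In the
   coordinates [z = e^w] the half annulus becomes the rectangle [[0, ln R] x [0, PI]], on which
   [G w = h (e^w) e^(rho (ln R - w))] is holomorphic with [|G| <= 1] on the boundary: the three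
   terms of [A] give this on the two real segments, on the unit circle and on the circle of
   radius [R].  The maximum modulus principle then gives [|h z| <= (|z| / R)^rho], hence the
   bound. *)

From Stdlib Require Import Lra.
Open Scope R_scope.

Lemma im_le_Cmod (x : C) : Rabs (Im x) <= Cmod x.
Proof.
  unfold Cmod, Im. rewrite <- (sqrt_pow2 (Rabs (snd x))) by apply Rabs_pos.
  apply sqrt_le_1_alt. rewrite <- (pow2_abs (snd x)). pose proof (pow2_ge_0 (fst x)). lra.
Qed.

Lemma Cmod_le_Re_Im (x : C) : Cmod x <= Rabs (Re x) + Rabs (Im x).
Proof.
  unfold Cmod, Re, Im. pose proof (Rabs_pos (fst x)); pose proof (Rabs_pos (snd x)).
  rewrite <- (sqrt_pow2 (Rabs (fst x) + Rabs (snd x))) by lra. apply sqrt_le_1_alt.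
  rewrite <- (pow2_abs (fst x)), <- (pow2_abs (snd x)). nra.
Qed.

Lemma Re_sub (u v : C) : Re (u - v) = Re u - Re v.
Proof. destruct u, v. unfold Cminus, Cplus, Copp, Re; simpl; ring. Qed.

Lemma Im_sub (u v : C) : Im (u - v) = Im u - Im v.
Proof. destruct u, v. unfold Cminus, Cplus, Copp, Im; simpl; ring. Qed.

Lemma Cminus_pair (x y x' y' : R) : ((x, y) - (x', y'))%C = (x - x', y - y').
Proof. reflexivity. Qed.

Lemma Cmod_sub_pos (u v : C) : u <> v -> 0 < Cmod (u - v).
Proof.
  intros Huv. apply Cmod_gt_0. intros E. apply Huv.
  replace u with ((u - v) + v)%C by ring. rewrite E. ring.
Qed.

Lemma le_0_of_le_eps (x K : R) : 0 <= K -> (forall eps, 0 < eps -> x <= eps * K) -> x <= 0.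
Proof.
  intros HK H. destruct (Rle_or_lt x 0) as [|Hx]; [assumption|].
  specialize (H (x / (2 * (K + 1))) ltac:(apply Rdiv_lt_0_compat; lra)).
  assert (x / (2 * (K + 1)) * K < x); [|lra].
  apply (Rmult_lt_reg_r (2 * (K + 1))); [lra|].
  replace (x / (2 * (K + 1)) * K * (2 * (K + 1))) with (x * K) by (field; lra). nra.
Qed.

Lemma Cmod_eq_0_of_le_eps (z : C) (K : R) :
  0 <= K -> (forall eps, 0 < eps -> Cmod z <= eps * K) -> z = 0%C.
Proof.
  intros HK H. apply Cmod_eq_0. apply Rle_antisym; [|apply Cmod_ge_0].
  exact (le_0_of_le_eps _ _ HK H).
Qed.

(** * Complex derivatives *)

Definition Ccontinuous (F : C -> C) (z : C) : Prop :=
  forall eps, 0 < eps -> exists del, 0 < del /\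
    forall w, Cmod (w - z) < del -> Cmod (F w - F z) < eps.

Local Notation C_Abs_NormedModule := (AbsRing_NormedModule C_AbsRing).

Definition is_cderive (F : C -> C) (z l : C) : Prop :=
  forall eps, 0 < eps -> exists del, 0 < del /\
    forall w, Cmod (w - z) < del -> Cmod (F w - F z - l * (w - z)) <= eps * Cmod (w - z).

Definition ex_cderive (F : C -> C) (z : C) : Prop := exists l, is_cderive F z l.

Lemma is_cderive_of_is_derive F z l :
  @is_derive C_AbsRing C_Abs_NormedModule F z l -> is_cderive F z l.
Proof.
  intros [_ H] eps Heps.
  specialize (H z (fun P HP => HP) (mkposreal eps Heps)).
  apply (locally_le_locally_norm (K := C_AbsRing) (V := C_Abs_NormedModule)) in H.
  destruct H as [d Hd]. exists d. split; [apply cond_pos|]. intros w Hw.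
  replace (F w - F z - l * (w - z))%C with (minus (minus (F w) (F z)) (scal (minus w z) l)).
  - exact (Hd w Hw).
  - unfold minus, plus, opp, scal; simpl. unfold mult; simpl. ring.
Qed.

Lemma is_derive_of_is_cderive F z l :
  is_cderive F z l -> @is_derive C_AbsRing C_Abs_NormedModule F z l.
Proof.
  intros H. split; [apply is_linear_scal_l|].
  intros x Hx.
  apply (is_filter_lim_locally_unique (K := C_AbsRing) (V := C_Abs_NormedModule)) in Hx.
  subst x. intros eps.
  apply (locally_norm_le_locally (K := C_AbsRing) (V := C_Abs_NormedModule)).
  destruct (H eps (cond_pos eps)) as [d [Hd Hw]].
  exists (mkposreal d Hd). intros y Hy. specialize (Hw y Hy).
  change (Cmod (minus (minus (F y) (F z)) (scal (minus y z) l)) <= eps * Cmod (minus y z)).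
  replace (minus (minus (F y) (F z)) (scal (minus y z) l)) with (F y - F z - l * (y - z))%C;
    [exact Hw|].
  unfold minus, plus, opp, scal; simpl. unfold mult; simpl. ring.
Qed.

Lemma ex_cderive_of_C_differentiable F z : C_differentiable F z -> ex_cderive F z.
Proof.
  intros [l [_ H]]. exists l. apply is_cderive_of_is_derive.
  split; [apply is_linear_scal_l | exact H].
Qed.

Ltac via_is_derive :=
  apply is_cderive_of_is_derive;
  repeat match goal with H : is_cderive _ _ _ |- _ => apply is_derive_of_is_cderive in H end.

Lemma is_cderive_const (c z : C) : is_cderive (fun _ => c) z 0.
Proof. via_is_derive. apply (is_derive_const (K := C_AbsRing) (V := C_Abs_NormedModule)). Qed.

Lemma is_cderive_id (z : C) : is_cderive (fun w => w) z 1.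
Proof. via_is_derive. apply (is_derive_id (K := C_AbsRing)). Qed.

Lemma is_cderive_plus F G z a b :
  is_cderive F z a -> is_cderive G z b -> is_cderive (fun w => F w + G w)%C z (a + b).
Proof.
  intros Ha Hb. via_is_derive.
  exact (is_derive_plus (K := C_AbsRing) (V := C_Abs_NormedModule) _ _ _ _ _ Ha Hb).
Qed.

Lemma is_cderive_opp F z a : is_cderive F z a -> is_cderive (fun w => - F w)%C z (- a).
Proof.
  intros Ha. via_is_derive.
  exact (is_derive_opp (K := C_AbsRing) (V := C_Abs_NormedModule) _ _ _ Ha).
Qed.

Lemma is_cderive_mult F G z a b :
  is_cderive F z a -> is_cderive G z b ->
  is_cderive (fun w => F w * G w)%C z (a * G z + F z * b).
Proof.
  intros Ha Hb. via_is_derive. apply (is_derive_mult (K := C_AbsRing)); auto.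
  intros; apply Cmult_comm.
Qed.

Lemma is_cderive_comp F G z a b :
  is_cderive G z b -> is_cderive F (G z) a -> is_cderive (fun w => F (G w)) z (b * a).
Proof.
  intros Hb Ha. via_is_derive.
  exact (is_derive_comp (K := C_AbsRing) (V := C_Abs_NormedModule) _ _ _ _ _ Ha Hb).
Qed.

Lemma is_cderive_continuous F z l : is_cderive F z l -> Ccontinuous F z.
Proof.
  intros H eps He. destruct (H 1 Rlt_0_1) as [d [Hd Hw]].
  pose proof (Cmod_ge_0 l).
  exists (Rmin d (eps / (Cmod l + 2))). split.
  { apply Rmin_pos; [lra | apply Rdiv_lt_0_compat; lra]. }
  intros w Hw'.
  pose proof (Rmin_l d (eps / (Cmod l + 2))). pose proof (Rmin_r d (eps / (Cmod l + 2))).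
  specialize (Hw w ltac:(lra)). pose proof (Cmod_ge_0 (w - z)).
  replace (F w - F z)%C with ((F w - F z - l * (w - z)) + l * (w - z))%C by ring.
  eapply Rle_lt_trans; [apply Cmod_triangle|]. rewrite Cmod_mult.
  assert (Cmod (w - z) * (Cmod l + 2) < eps).
  { apply (Rlt_le_trans _ (eps / (Cmod l + 2) * (Cmod l + 2))); [apply Rmult_lt_compat_r; lra|].
    right; field; lra. }
  nra.
Qed.

Lemma ex_cderive_continuous F z : ex_cderive F z -> Ccontinuous F z.
Proof. intros [l Hl]. exact (is_cderive_continuous F z l Hl). Qed.

Lemma Ccontinuous_lincomb F G (k : C) w :
  Ccontinuous F w -> Ccontinuous G w -> Ccontinuous (fun u => F u + k * G u)%C w.
Proof.
  intros HF HG eps He. pose proof (Cmod_ge_0 k).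
  destruct (HF (eps / 2) ltac:(lra)) as [d1 [Hd1 H1]].
  destruct (HG (eps / 2 / (Cmod k + 1))) as [d2 [Hd2 H2]]; [apply Rdiv_lt_0_compat; lra|].
  exists (Rmin d1 d2). split; [apply Rmin_pos; auto|]. intros u Hu.
  specialize (H1 u (Rlt_le_trans _ _ _ Hu (Rmin_l _ _))).
  specialize (H2 u (Rlt_le_trans _ _ _ Hu (Rmin_r _ _))).
  replace (F u + k * G u - (F w + k * G w))%C with ((F u - F w) + k * (G u - G w))%C by ring.
  eapply Rle_lt_trans; [apply Cmod_triangle|]. rewrite Cmod_mult.
  assert (Cmod k * Cmod (G u - G w) <= eps / 2).
  { apply Rle_trans with ((Cmod k + 1) * (eps / 2 / (Cmod k + 1))); [|right; field; lra].
    pose proof (Cmod_ge_0 (G u - G w)). nra. }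
  lra.
Qed.

Lemma Ccontinuous_affine (al be w : C) : Ccontinuous (fun u => al + be * u)%C w.
Proof.
  apply (Ccontinuous_lincomb (fun _ => al) (fun u => u)); apply ex_cderive_continuous.
  - exists 0%C. apply is_cderive_const.
  - exists 1%C. apply is_cderive_id.
Qed.

(* [1/w - 1/u + (w - u)/u^2 = (w - u)^2 / (u^2 w)] and [|w| >= |u|/2] near [u]. *)
Lemma is_cderive_Cinv (u : C) : u <> 0%C -> is_cderive Cinv u (- / (u * u)).
Proof.
  intros Hu eps He. pose proof (proj1 (Cmod_gt_0 u) Hu) as HU.
  set (du := Cmod u) in *.
  exists (Rmin (du / 2) (eps * (du * du * du) / 2)). split.
  { apply Rmin_pos; [lra|]. apply Rdiv_lt_0_compat; [|lra].
    repeat apply Rmult_lt_0_compat; auto. }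
  intros w Hw. pose proof (Rmin_l (du / 2) (eps * (du * du * du) / 2)) as H1.
  pose proof (Rmin_r (du / 2) (eps * (du * du * du) / 2)) as H2.
  set (m := Cmod (w - u)) in *. pose proof (Cmod_ge_0 (w - u)) as Hm. fold m in Hm.
  assert (Hwu : du <= Cmod w + m).
  { pose proof (Cmod_triangle w (- (w - u))) as T.
    replace (w + - (w - u))%C with u in T by ring. rewrite Cmod_opp in T. exact T. }
  assert (HW : du / 2 <= Cmod w) by lra.
  assert (Hw0 : w <> 0%C) by (intros E; rewrite E, Cmod_0 in HW; lra).
  replace (/ w - / u - - / (u * u) * (w - u))%C with ((w - u) * (w - u) * / (u * u * w))%C
    by (field; split; auto).
  rewrite Cmod_mult, Cmod_inv, !Cmod_mult
    by (repeat apply Cmult_neq_0; auto).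
  fold du m. apply (Rmult_le_reg_r (du * du * Cmod w)); [repeat apply Rmult_lt_0_compat; lra|].
  rewrite Rmult_assoc, Rinv_l by (repeat apply Rmult_integral_contrapositive_currified; lra).
  assert (m * m <= m * (eps * (du * du * du) / 2)) by (apply Rmult_le_compat_l; lra).
  assert (eps * m * (du * du * (du / 2)) <= eps * m * (du * du * Cmod w)).
  { apply Rmult_le_compat_l; [nra|]. apply Rmult_le_compat_l; nra. }
  nra.
Qed.

Lemma is_cderive_ext_loc F G z l r :
  0 < r -> (forall w, Cmod (w - z) < r -> F w = G w) -> is_cderive G z l -> is_cderive F z l.
Proof.
  intros Hr E H eps He. destruct (H eps He) as [d [Hd Hw]]. exists (Rmin d r). split.
  { apply Rmin_pos; auto. }
  intros w Hw'. pose proof (Rmin_l d r). pose proof (Rmin_r d r).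
  assert (Hz : Cmod (z - z) < r) by (rewrite (proj1 (Ceq_minus z z) eq_refl), Cmod_0; lra).
  rewrite (E w), (E z) by lra. apply Hw. lra.
Qed.

(** * The complex exponential *)

Definition cexp (w : C) : C := (exp (Re w) * cos (Im w), exp (Re w) * sin (Im w)).

Lemma cexp_plus a b : cexp (a + b) = (cexp a * cexp b)%C.
Proof.
  destruct a as [a1 a2], b as [b1 b2]. unfold cexp, Cmult, Cplus; simpl.
  rewrite exp_plus, cos_plus, sin_plus. f_equal; ring.
Qed.

Lemma cexp_0 : cexp 0 = 1%C.
Proof. unfold cexp; simpl. rewrite exp_0, cos_0, sin_0. unfold RtoC. f_equal; ring. Qed.

Lemma Cmod_cexp w : Cmod (cexp w) = exp (Re w).
Proof.
  unfold Cmod, cexp; simpl. pose proof (sin2_cos2 (Im w)) as H. unfold Rsqr in H.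
  replace (exp (Re w) * cos (Im w) * (exp (Re w) * cos (Im w) * 1) +
           exp (Re w) * sin (Im w) * (exp (Re w) * sin (Im w) * 1)) with (exp (Re w) ^ 2)
    by (transitivity (exp (Re w) ^ 2 * (sin (Im w) * sin (Im w) + cos (Im w) * cos (Im w)));
        [rewrite H|]; ring).
  apply sqrt_pow2. left; apply exp_pos.
Qed.

(* The factor [2]: the mean value theorem is applied to the real and imaginary parts separately. *)
Lemma Cmod_sub_le_of_derive (g dg : R -> C) (K : R) :
  (forall t, is_derive (fun s => Re (g s)) t (Re (dg t))) ->
  (forall t, is_derive (fun s => Im (g s)) t (Im (dg t))) ->
  (forall t, 0 <= t <= 1 -> Cmod (dg t) <= K) ->
  Cmod (g 1 - g 0) <= 2 * K.
Proof.
  intros Hre Him HK.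
  assert (Part : forall P : C -> R, (forall u, Rabs (P u) <= Cmod u) ->
            (forall t, is_derive (fun s => P (g s)) t (P (dg t))) ->
            Rabs (P (g 1) - P (g 0)) <= K).
  { intros P HP Hd. destruct (MVT_gen (fun s => P (g s)) 0 1 (fun t => P (dg t))) as [c [Hc E]].
    - intros t _. apply Hd.
    - intros t _. apply derivable_continuous_pt. exists (P (dg t)). apply is_derive_Reals, Hd.
    - rewrite E. replace (P (dg c) * (1 - 0)) with (P (dg c)) by ring.
      rewrite Rmin_left, Rmax_right in Hc by lra.
      eapply Rle_trans; [apply HP | apply HK; exact Hc]. }
  pose proof (Part Re re_le_Cmod Hre). pose proof (Part Im im_le_Cmod Him).
  eapply Rle_trans; [apply Cmod_le_Re_Im|].
  rewrite Re_sub, Im_sub. lra.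
Qed.

Lemma exp_le_compat x y : x <= y -> exp x <= exp y.
Proof. intros [H|H]; [left; apply exp_increasing; exact H | rewrite H; lra]. Qed.

Lemma exp_le_3_of_le_1 t : t <= 1 -> exp t <= 3.
Proof.
  intros Ht. apply Rle_trans with (exp 1); [apply exp_le_compat; exact Ht | exact exp_le_3].
Qed.

Lemma Cmod_cexp_sub_1 h : Cmod h <= 1 -> Cmod (cexp h - 1) <= 6 * Cmod h.
Proof.
  intros Hh. rewrite <- cexp_0. replace h with (RtoC 1 * h)%C at 1 by ring.
  replace (RtoC 0) with (RtoC 0 * h)%C by ring.
  replace (6 * Cmod h) with (2 * (3 * Cmod h)) by ring.
  apply (Cmod_sub_le_of_derive (fun s => cexp (RtoC s * h)) (fun t => h * cexp (RtoC t * h))%C).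
  1, 2: intros t; destruct h as [a b]; unfold cexp, Re, Im, RtoC, Cmult; simpl;
        auto_derive; auto; unfold Rminus; ring.
  intros t Ht. rewrite Cmod_mult, Cmod_cexp, Rmult_comm.
  apply Rmult_le_compat_r; [apply Cmod_ge_0|].
  apply exp_le_3_of_le_1. pose proof (re_le_Cmod h). destruct h as [a b]; simpl in *.
  apply Rabs_le_between in H. nra.
Qed.

Lemma Cmod_cexp_sub_1_sub h : Cmod h <= 1 -> Cmod (cexp h - 1 - h) <= 12 * Cmod h ^ 2.
Proof.
  intros Hh. pose proof (Cmod_ge_0 h).
  replace (cexp h - 1 - h)%C with
    ((cexp (RtoC 1 * h) - RtoC 1 * h) - (cexp (RtoC 0 * h) - RtoC 0 * h))%C
    by (rewrite Cmult_0_l, Cmult_1_l, cexp_0; ring).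
  replace (12 * Cmod h ^ 2) with (2 * (6 * Cmod h ^ 2)) by ring.
  apply (Cmod_sub_le_of_derive (fun s => cexp (RtoC s * h) - RtoC s * h)%C
           (fun t => h * (cexp (RtoC t * h) - 1))%C).
  1, 2: intros t; destruct h as [a b]; unfold cexp, Re, Im, RtoC, Cmult, Cminus, Cplus, Copp; simpl;
        auto_derive; auto; unfold Rminus; ring.
  intros t Ht. rewrite Cmod_mult.
  assert (Hth : Cmod (RtoC t * h) <= Cmod h).
  { rewrite Cmod_mult, Cmod_R, Rabs_pos_eq by lra. nra. }
  pose proof (Cmod_cexp_sub_1 (RtoC t * h) ltac:(lra)). simpl. nra.
Qed.

Lemma is_cderive_cexp z : is_cderive cexp z (cexp z).
Proof.
  intros eps He. set (K := 12 * Cmod (cexp z) + 1).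
  assert (HK : 0 < K) by (pose proof (Cmod_ge_0 (cexp z)); unfold K; lra).
  exists (Rmin 1 (eps / K)). split; [apply Rmin_pos; [lra | apply Rdiv_lt_0_compat; lra]|].
  intros w Hw. pose proof (Rmin_l 1 (eps / K)). pose proof (Rmin_r 1 (eps / K)).
  replace w with (z + (w - z))%C at 1 by ring. rewrite cexp_plus.
  replace (cexp z * cexp (w - z) - cexp z - cexp z * (w - z))%C
    with (cexp z * (cexp (w - z) - 1 - (w - z)))%C by ring.
  rewrite Cmod_mult. pose proof (Cmod_cexp_sub_1_sub (w - z) ltac:(lra)).
  pose proof (Cmod_ge_0 (w - z)).
  assert (Cmod (w - z) * K <= eps).
  { apply (Rle_trans _ (eps / K * K)); [apply Rmult_le_compat_r; lra|].
    right; field; lra. }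
  pose proof (Cmod_ge_0 (cexp z)). unfold K in *. simpl in *. nra.
Qed.

(** * Integrals of complex-valued functions on segments *)

Definition CInt (f : R -> C) (a b : R) : C :=
  (RInt (fun t => Re (f t)) a b, RInt (fun t => Im (f t)) a b).

Definition ex_CInt (f : R -> C) (a b : R) : Prop :=
  ex_RInt (fun t => Re (f t)) a b /\ ex_RInt (fun t => Im (f t)) a b.

Lemma ex_CInt_comp_path (F : C -> C) (p : R -> C) (a b : R) :
  (forall s t, Cmod (p s - p t) <= Rabs (s - t)) ->
  (forall t, Rmin a b <= t <= Rmax a b -> Ccontinuous F (p t)) ->
  ex_CInt (fun t => F (p t)) a b.
Proof.
  intros Hp HF.
  assert (Part : forall P : C -> R, (forall u v, Rabs (P u - P v) <= Cmod (u - v)) ->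
            ex_RInt (fun t => P (F (p t))) a b).
  { intros P HP. apply (ex_RInt_continuous (V := R_CompleteNormedModule)). intros t Ht.
    apply continuity_pt_filterlim. intros eps He.
    destruct (HF t Ht eps He) as [d [Hd Hw]]. exists d. split; [exact Hd|].
    intros s [_ Hs]. eapply Rle_lt_trans; [apply HP|]. apply Hw.
    eapply Rle_lt_trans; [apply Hp | exact Hs]. }
  split; apply Part; intros u v.
  - rewrite <- Re_sub. apply re_le_Cmod.
  - rewrite <- Im_sub. apply im_le_Cmod.
Qed.

Lemma CInt_ext (f g : R -> C) (a b : R) :
  (forall t, Rmin a b < t < Rmax a b -> f t = g t) -> CInt f a b = CInt g a b.
Proof.
  intros E. unfold CInt. f_equal; apply RInt_ext; intros t Ht; rewrite (E t Ht); reflexivity.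
Qed.

Lemma RInt_lincomb (h u v w : R -> R) (p q a b : R) :
  (forall t, h t = u t + (p * v t + q * w t)) ->
  ex_RInt u a b -> ex_RInt v a b -> ex_RInt w a b ->
  ex_RInt h a b /\ RInt h a b = RInt u a b + (p * RInt v a b + q * RInt w a b).
Proof.
  intros E Hu Hv Hw.
  assert (H : is_RInt h a b (RInt u a b + (p * RInt v a b + q * RInt w a b))).
  { apply (is_RInt_ext (fun t => u t + (p * v t + q * w t))); [intros; symmetry; apply E|].
    apply (is_RInt_plus (V := R_CompleteNormedModule)); [apply RInt_correct; exact Hu|].
    apply (is_RInt_plus (V := R_CompleteNormedModule));
      apply (is_RInt_scal (V := R_CompleteNormedModule)), RInt_correct; assumption. }
  split; [eexists; exact H | exact (is_RInt_unique _ _ _ _ H)].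
Qed.

Lemma CInt_lincomb (f g : R -> C) (k : C) (a b : R) :
  ex_CInt f a b -> ex_CInt g a b ->
  CInt (fun t => f t + k * g t)%C a b = (CInt f a b + k * CInt g a b)%C.
Proof.
  destruct k as [kr ki]. intros [Hf1 Hf2] [Hg1 Hg2]. unfold CInt.
  assert (ERe : forall t,
    Re (f t + (kr, ki) * g t)%C = Re (f t) + (kr * Re (g t) + - ki * Im (g t)))
    by (intros t; unfold Re, Im; simpl; ring).
  assert (EIm : forall t,
    Im (f t + (kr, ki) * g t)%C = Im (f t) + (kr * Im (g t) + ki * Re (g t)))
    by (intros t; unfold Re, Im; simpl; ring).
  rewrite (proj2 (RInt_lincomb _ _ _ _ _ _ a b ERe Hf1 Hg1 Hg2)),
    (proj2 (RInt_lincomb _ _ _ _ _ _ a b EIm Hf2 Hg2 Hg1)).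
  unfold Cplus, Cmult; simpl. f_equal; ring.
Qed.

Lemma ex_CInt_sub (f g : R -> C) (a b : R) :
  ex_CInt f a b -> ex_CInt g a b -> ex_CInt (fun t => f t - g t)%C a b.
Proof.
  intros [Hf1 Hf2] [Hg1 Hg2]. split.
  - refine (proj1 (RInt_lincomb _ _ _ _ (-1) 0 a b _ Hf1 Hg1 Hg2)).
    intros t. rewrite Re_sub. ring.
  - refine (proj1 (RInt_lincomb _ _ _ _ (-1) 0 a b _ Hf2 Hg2 Hg1)).
    intros t. rewrite Im_sub. ring.
Qed.

Lemma CInt_Chasles (f : R -> C) (a b c : R) :
  ex_CInt f a b -> ex_CInt f b c -> (CInt f a b + CInt f b c)%C = CInt f a c.
Proof.
  intros [H1 H2] [H3 H4]. unfold CInt, Cplus; simpl.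
  rewrite <- (RInt_Chasles (V := R_CompleteNormedModule) (fun t => Re (f t)) a b c),
    <- (RInt_Chasles (V := R_CompleteNormedModule) (fun t => Im (f t)) a b c) by assumption.
  reflexivity.
Qed.

Lemma CInt_const (k : C) (a b : R) : CInt (fun _ => k) a b = (RtoC (b - a) * k)%C.
Proof.
  unfold CInt. rewrite !(RInt_const (V := R_CompleteNormedModule)).
  unfold scal; simpl; unfold mult; simpl. unfold RtoC, Cmult, Re, Im; simpl. f_equal; ring.
Qed.

Lemma Cmod_CInt_le (f : R -> C) (a b M : R) :
  a <= b -> ex_CInt f a b -> (forall t, a <= t <= b -> Cmod (f t) <= M) ->
  Cmod (CInt f a b) <= 2 * (b - a) * M.
Proof.
  intros Hab [H1 H2] HM. eapply Rle_trans; [apply Cmod_le_Re_Im|].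
  unfold CInt, Re at 1, Im at 1; simpl.
  assert (Rabs (RInt (fun t => Re (f t)) a b) <= (b - a) * M).
  { apply abs_RInt_le_const; auto. intros t Ht. eapply Rle_trans; [apply re_le_Cmod | auto]. }
  assert (Rabs (RInt (fun t => Im (f t)) a b) <= (b - a) * M).
  { apply abs_RInt_le_const; auto. intros t Ht. eapply Rle_trans; [apply im_le_Cmod | auto]. }
  lra.
Qed.

(** * Integrals over the boundary of a rectangle *)

(* Counterclockwise integral of [F dz] over the boundary of [[a, b] x [c, d]]. *)
Definition rect_integral (F : C -> C) (a b c d : R) : C :=
  (CInt (fun x => F (x, c) - F (x, d)) a b + Ci * CInt (fun y => F (b, y) - F (a, y)) c d)%C.

Definition continuous_on_rect (F : C -> C) (a b c d : R) : Prop :=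
  forall x y, a <= x <= b -> c <= y <= d -> Ccontinuous F (x, y).

Definition continuous_on_rect_boundary (F : C -> C) (a b c d : R) : Prop :=
  (forall x, a <= x <= b -> Ccontinuous F (x, c) /\ Ccontinuous F (x, d)) /\
  (forall y, c <= y <= d -> Ccontinuous F (a, y) /\ Ccontinuous F (b, y)).

Lemma continuous_on_rect_sub F a b c d a' b' c' d' :
  continuous_on_rect F a b c d -> a <= a' -> b' <= b -> c <= c' -> d' <= d ->
  continuous_on_rect F a' b' c' d'.
Proof. intros HF ha hb hc hd x y hx hy. apply HF; lra. Qed.

Lemma continuous_on_rect_boundary_of F a b c d :
  a <= b -> c <= d -> continuous_on_rect F a b c d -> continuous_on_rect_boundary F a b c d.
Proof. intros Hab Hcd HF. split; intros t Ht; split; apply HF; lra. Qed.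

Lemma ex_CInt_horizontal F a b y :
  (forall x, a <= x <= b -> Ccontinuous F (x, y)) -> a <= b -> ex_CInt (fun x => F (x, y)) a b.
Proof.
  intros HF Hab. apply (ex_CInt_comp_path F (fun x => (x, y))).
  - intros s t. rewrite Cminus_pair. eapply Rle_trans; [apply Cmod_le_Re_Im|]. simpl.
    rewrite Rminus_diag, Rabs_R0. lra.
  - rewrite Rmin_left, Rmax_right by lra. exact HF.
Qed.

Lemma ex_CInt_vertical F c d x :
  (forall y, c <= y <= d -> Ccontinuous F (x, y)) -> c <= d -> ex_CInt (fun y => F (x, y)) c d.
Proof.
  intros HF Hcd. apply (ex_CInt_comp_path F (fun y => (x, y))).
  - intros s t. rewrite Cminus_pair. eapply Rle_trans; [apply Cmod_le_Re_Im|]. simpl.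
    rewrite Rminus_diag, Rabs_R0. lra.
  - rewrite Rmin_left, Rmax_right by lra. exact HF.
Qed.

Lemma ex_CInt_rect_edges F a b c d :
  continuous_on_rect_boundary F a b c d -> a <= b -> c <= d ->
  ex_CInt (fun x => F (x, c) - F (x, d))%C a b /\ ex_CInt (fun y => F (b, y) - F (a, y))%C c d.
Proof.
  intros [H1 H2] Hab Hcd. split; apply ex_CInt_sub.
  1, 2: apply ex_CInt_horizontal; [intros x Hx; apply (H1 x Hx) | exact Hab].
  1, 2: apply ex_CInt_vertical; [intros y Hy; apply (H2 y Hy) | exact Hcd].
Qed.

Lemma rect_integral_lincomb F G (k : C) a b c d :
  continuous_on_rect_boundary F a b c d -> continuous_on_rect_boundary G a b c d ->
  a <= b -> c <= d ->
  rect_integral (fun w => F w + k * G w)%C a b c d =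
  (rect_integral F a b c d + k * rect_integral G a b c d)%C.
Proof.
  intros HF HG Hab Hcd.
  destruct (ex_CInt_rect_edges F a b c d HF Hab Hcd) as [F1 F2].
  destruct (ex_CInt_rect_edges G a b c d HG Hab Hcd) as [G1 G2].
  unfold rect_integral.
  rewrite (CInt_ext _ (fun x => (F (x, c) - F (x, d)) + k * (G (x, c) - G (x, d)))%C)
    by (intros; ring).
  rewrite (CInt_ext (fun y => F (b, y) + k * G (b, y) - (F (a, y) + k * G (a, y)))%C
      (fun y => (F (b, y) - F (a, y)) + k * (G (b, y) - G (a, y)))%C)
    by (intros; ring).
  rewrite !CInt_lincomb by assumption. ring.
Qed.

Lemma rect_integral_ext F G a b c d :
  (forall x, a <= x <= b -> F (x, c) = G (x, c) /\ F (x, d) = G (x, d)) ->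
  (forall y, c <= y <= d -> F (a, y) = G (a, y) /\ F (b, y) = G (b, y)) ->
  a <= b -> c <= d -> rect_integral F a b c d = rect_integral G a b c d.
Proof.
  intros H1 H2 Hab Hcd. unfold rect_integral. f_equal; [|f_equal]; apply CInt_ext; intros t Ht;
    rewrite ?Rmin_left, ?Rmax_right in Ht by lra.
  - destruct (H1 t ltac:(lra)) as [-> ->]. reflexivity.
  - destruct (H2 t ltac:(lra)) as [-> ->]. reflexivity.
Qed.

Lemma rect_integral_split_x F a m b c d :
  continuous_on_rect F a b c d -> a <= m <= b -> c <= d ->
  rect_integral F a b c d = (rect_integral F a m c d + rect_integral F m b c d)%C.
Proof.
  intros HF Hm Hcd.
  destruct (ex_CInt_rect_edges F a m c d) as [B1 V1];
    [apply continuous_on_rect_boundary_of, (continuous_on_rect_sub F a b c d); auto; lra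
    | lra | lra |].
  destruct (ex_CInt_rect_edges F m b c d) as [B2 V2];
    [apply continuous_on_rect_boundary_of, (continuous_on_rect_sub F a b c d); auto; lra
    | lra | lra |].
  unfold rect_integral. rewrite <- (CInt_Chasles _ a m b) by assumption.
  rewrite (CInt_ext (fun y => F (b, y) - F (a, y))%C
             (fun y => (F (m, y) - F (a, y)) + 1 * (F (b, y) - F (m, y)))%C)
    by (intros; ring).
  rewrite CInt_lincomb by assumption. ring.
Qed.

Lemma rect_integral_split_y F a b c m d :
  continuous_on_rect F a b c d -> c <= m <= d -> a <= b ->
  rect_integral F a b c d = (rect_integral F a b c m + rect_integral F a b m d)%C.
Proof.
  intros HF Hm Hab.
  destruct (ex_CInt_rect_edges F a b c m) as [B1 V1];
    [apply continuous_on_rect_boundary_of, (continuous_on_rect_sub F a b c d); auto; lra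
    | lra | lra |].
  destruct (ex_CInt_rect_edges F a b m d) as [B2 V2];
    [apply continuous_on_rect_boundary_of, (continuous_on_rect_sub F a b c d); auto; lra
    | lra | lra |].
  unfold rect_integral. rewrite <- (CInt_Chasles _ c m d) by assumption.
  rewrite (CInt_ext (fun x => F (x, c) - F (x, d))%C
             (fun x => (F (x, c) - F (x, m)) + 1 * (F (x, m) - F (x, d)))%C)
    by (intros; ring).
  rewrite CInt_lincomb by assumption. ring.
Qed.

Lemma Cmod_rect_integral_le F a b c d M :
  continuous_on_rect_boundary F a b c d -> a <= b -> c <= d ->
  (forall x, a <= x <= b -> Cmod (F (x, c)) <= M /\ Cmod (F (x, d)) <= M) ->
  (forall y, c <= y <= d -> Cmod (F (a, y)) <= M /\ Cmod (F (b, y)) <= M) ->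
  Cmod (rect_integral F a b c d) <= 4 * M * ((b - a) + (d - c)).
Proof.
  intros HF Hab Hcd HM1 HM2. destruct (ex_CInt_rect_edges F a b c d HF Hab Hcd) as [E1 E2].
  assert (Hsub : forall u v, Cmod u <= M -> Cmod v <= M -> Cmod (u - v) <= 2 * M).
  { intros u v Hu Hv. unfold Cminus. eapply Rle_trans; [apply Cmod_triangle|].
    rewrite Cmod_opp. lra. }
  pose proof (Cmod_CInt_le _ a b (2 * M) Hab E1
    ltac:(intros x Hx; destruct (HM1 x Hx); auto)).
  pose proof (Cmod_CInt_le _ c d (2 * M) Hcd E2
    ltac:(intros y Hy; destruct (HM2 y Hy); auto)).
  unfold rect_integral. eapply Rle_trans; [apply Cmod_triangle|].
  rewrite Cmod_mult, Cmod_Ci. lra.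
Qed.

Lemma rect_integral_affine (al be : C) a b c d :
  rect_integral (fun w => al + be * w)%C a b c d = 0%C.
Proof.
  unfold rect_integral.
  rewrite (CInt_ext _ (fun _ => be * (0, c - d)%R)%C)
    by (intros; unfold Cminus, Cplus, Cmult, Copp; simpl; f_equal; ring).
  rewrite (CInt_ext (fun y => al + be * (b, y) - (al + be * (a, y)))%C
             (fun _ => be * (b - a, 0)%R)%C)
    by (intros; unfold Cminus, Cplus, Cmult, Copp; simpl; f_equal; ring).
  rewrite !CInt_const. destruct be. unfold Cplus, Cmult, RtoC, Ci; simpl. f_equal; ring.
Qed.

(** * Goursat's theorem for rectangles *)

Lemma nested_intervals (u v : nat -> R) :
  Un_growing u -> (forall n, v (S n) <= v n) -> (forall n, u n <= v n) ->
  exists p, forall n, u n <= p <= v n.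
Proof.
  intros Hu Hv Huv.
  assert (Hle : forall n m, u n <= v m).
  { intros n m. destruct (Nat.le_ge_cases n m) as [h|h].
    - apply Rle_trans with (u m); [apply tech9; auto | apply Huv].
    - apply Rle_trans with (v n); [apply Huv|].
      induction h; [lra | apply Rle_trans with (v m0); auto]. }
  destruct (completeness (EUn u)) as [p [Hub Hlub]].
  - exists (v 0%nat). intros x [n ->]. apply Hle.
  - exists (u 0%nat). exists 0%nat. reflexivity.
  - exists p. intros n. split.
    + apply Hub. exists n. reflexivity.
    + apply Hlub. intros x [k ->]. apply Hle.
Qed.

Lemma exists_pow2_gt (x del : R) : 0 < del -> exists N, x < del * 2 ^ N.
Proof.
  intros Hdel. destruct (INR_archimed del x Hdel) as [N HN]. exists N.
  pose proof (Rle_pow_lin 1 N ltac:(lra)). replace (1 + 1) with 2 in H by ring. nra.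
Qed.

Record rect := Rect { ra : R; rb : R; rc : R; rd : R }.

Definition rect_integral_of F (q : rect) := rect_integral F (ra q) (rb q) (rc q) (rd q).

Definition quarter F (q : rect) : rect :=
  let m := (ra q + rb q) / 2 in let n := (rc q + rd q) / 2 in
  let q1 := Rect (ra q) m (rc q) n in let q2 := Rect m (rb q) (rc q) n in
  let q3 := Rect (ra q) m n (rd q) in let q4 := Rect m (rb q) n (rd q) in
  let big q' := Rle_dec (Cmod (rect_integral_of F q) / 4) (Cmod (rect_integral_of F q')) in
  if big q1 then q1 else if big q2 then q2 else if big q3 then q3 else q4.

Lemma quarter_spec F q :
  continuous_on_rect F (ra q) (rb q) (rc q) (rd q) -> ra q <= rb q -> rc q <= rd q ->
  let q' := quarter F q in
  ra q <= ra q' /\ rb q' <= rb q /\ rc q <= rc q' /\ rd q' <= rd q /\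
  rb q' - ra q' = (rb q - ra q) / 2 /\ rd q' - rc q' = (rd q - rc q) / 2 /\
  Cmod (rect_integral_of F q) <= 4 * Cmod (rect_integral_of F q').
Proof.
  destruct q as [a b c d]. simpl. intros HF Hab Hcd.
  set (m := (a + b) / 2). set (n := (c + d) / 2).
  assert (E : rect_integral F a b c d =
    (rect_integral F a m c n + rect_integral F m b c n +
     (rect_integral F a m n d + rect_integral F m b n d))%C).
  { rewrite (rect_integral_split_y F a b c n d), (rect_integral_split_x F a m b c n),
      (rect_integral_split_x F a m b n d)
      by (try (eapply continuous_on_rect_sub; [exact HF | ..]); unfold m, n; lra).
    ring. }
  assert (T : Cmod (rect_integral F a b c d) <=
    Cmod (rect_integral F a m c n) + Cmod (rect_integral F m b c n) +
    Cmod (rect_integral F a m n d) + Cmod (rect_integral F m b n d)).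
  { rewrite E. eapply Rle_trans; [apply Cmod_triangle|].
    pose proof (Cmod_triangle (rect_integral F a m c n) (rect_integral F m b c n)).
    pose proof (Cmod_triangle (rect_integral F a m n d) (rect_integral F m b n d)). lra. }
  unfold quarter, rect_integral_of in *; simpl in *. fold m n.
  repeat destruct Rle_dec; simpl; unfold m, n in *; repeat split; lra.
Qed.

Fixpoint quarters F (q : rect) (n : nat) : rect :=
  match n with O => q | S n => quarter F (quarters F q n) end.

Section Quarters.

Variables (F : C -> C) (q0 : rect).
Hypotheses (HF : continuous_on_rect F (ra q0) (rb q0) (rc q0) (rd q0))
  (Hab : ra q0 <= rb q0) (Hcd : rc q0 <= rd q0).

Lemma quarters_spec n : let q := quarters F q0 n in
  ra q0 <= ra q <= rb q /\ rb q <= rb q0 /\ rc q0 <= rc q <= rd q /\ rd q <= rd q0 /\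
  rb q - ra q = (rb q0 - ra q0) / 2 ^ n /\ rd q - rc q = (rd q0 - rc q0) / 2 ^ n /\
  Cmod (rect_integral_of F q0) <= 2 ^ n * 2 ^ n * Cmod (rect_integral_of F q).
Proof.
  induction n as [|n IH]; simpl; [repeat split; lra|].
  destruct IH as (h1 & h2 & h3 & h4 & h5 & h6 & h7).
  destruct (quarter_spec F (quarters F q0 n)) as (k1 & k2 & k3 & k4 & k5 & k6 & k7);
    [eapply continuous_on_rect_sub; [exact HF | ..]; lra | lra | lra |].
  assert (P : 0 < 2 ^ n) by (apply pow_lt; lra).
  repeat split; try lra.
  - rewrite k5, h5. field. lra.
  - rewrite k6, h6. field. lra.
  - eapply Rle_trans; [exact h7|]. nra.
Qed.

Lemma quarters_step n : let q := quarters F q0 n in let q' := quarters F q0 (S n) in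
  ra q <= ra q' /\ rb q' <= rb q /\ rc q <= rc q' /\ rd q' <= rd q.
Proof.
  destruct (quarters_spec n) as (h1 & h2 & h3 & h4 & _).
  destruct (quarter_spec F (quarters F q0 n)) as (k1 & k2 & k3 & k4 & _);
    [eapply continuous_on_rect_sub; [exact HF | ..]; lra | lra | lra |].
  simpl. auto.
Qed.

Lemma quarters_common_point :
  exists x y, forall n, let q := quarters F q0 n in ra q <= x <= rb q /\ rc q <= y <= rd q.
Proof.
  destruct (nested_intervals (fun n => ra (quarters F q0 n)) (fun n => rb (quarters F q0 n)))
    as [x Hx]; [intros n; apply quarters_step | intros n; apply quarters_step
               | intros n; apply quarters_spec |].
  destruct (nested_intervals (fun n => rc (quarters F q0 n)) (fun n => rd (quarters F q0 n)))
    as [y Hy]; [intros n; apply quarters_step | intros n; apply quarters_step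
               | intros n; apply quarters_spec |].
  exists x, y. intros n. split; [apply Hx | apply Hy].
Qed.

End Quarters.

(* Subtract the tangent affine map at [p], whose integral vanishes. *)
Lemma Cmod_rect_integral_near F p l :
  is_cderive F p l -> forall eps, 0 < eps -> exists del, 0 < del /\
  forall a b c d, a <= Re p <= b -> c <= Im p <= d -> (b - a) + (d - c) < del ->
    continuous_on_rect F a b c d ->
    Cmod (rect_integral F a b c d) <= 4 * eps * ((b - a) + (d - c)) ^ 2.
Proof.
  intros H eps He. destruct (H eps He) as [del [Hdel Hw]]. exists del. split; [exact Hdel|].
  intros a b c d Hx Hy Hs HF. set (s := (b - a) + (d - c)) in *.
  set (aff := fun w => (F p - l * p + l * w)%C).
  assert (Haff : continuous_on_rect aff a b c d) by (intros x y _ _; apply Ccontinuous_affine).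
  assert (HFaff : continuous_on_rect (fun w => F w + -1 * aff w)%C a b c d)
    by (intros x y hx hy; apply Ccontinuous_lincomb; [apply HF | apply Haff]; auto).
  assert (E : rect_integral F a b c d = rect_integral (fun w => F w + -1 * aff w)%C a b c d).
  { rewrite rect_integral_lincomb by (try apply continuous_on_rect_boundary_of; auto; lra).
    unfold aff. rewrite rect_integral_affine. ring. }
  assert (Hbound : forall x y, a <= x <= b -> c <= y <= d ->
                     Cmod (F (x, y) + -1 * aff (x, y)) <= eps * s).
  { intros x y hx hy.
    assert (Hd : Cmod ((x, y) - p) <= s).
    { destruct p as [px py]. simpl in *. eapply Rle_trans; [apply Cmod_le_Re_Im|].
      rewrite Re_sub, Im_sub. simpl. unfold s. unfold Rabs; repeat destruct Rcase_abs; lra. }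
    replace (F (x, y) + -1 * aff (x, y))%C with (F (x, y) - F p - l * ((x, y) - p))%C
      by (unfold aff; ring).
    eapply Rle_trans; [apply Hw; lra|]. apply Rmult_le_compat_l; lra. }
  rewrite E. replace (4 * eps * s ^ 2) with (4 * (eps * s) * s) by ring.
  apply Cmod_rect_integral_le; try (apply continuous_on_rect_boundary_of; auto); try lra.
  - intros x hx. split; apply Hbound; lra.
  - intros y hy. split; apply Hbound; lra.
Qed.

Theorem goursat F a b c d :
  a <= b -> c <= d -> (forall x y, a <= x <= b -> c <= y <= d -> ex_cderive F (x, y)) ->
  rect_integral F a b c d = 0%C.
Proof.
  intros Hab Hcd HD.
  assert (HF : continuous_on_rect F a b c d)
    by (intros x y hx hy; apply ex_cderive_continuous, HD; auto).
  set (q0 := Rect a b c d). set (s := (b - a) + (d - c)).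
  destruct (quarters_common_point F q0 HF Hab Hcd) as [x [y Hxy]].
  destruct (HD x y) as [l Hl]; [apply (Hxy 0%nat) .. |].
  apply (Cmod_eq_0_of_le_eps _ (4 * s ^ 2)); [nra|]. intros eps He.
  destruct (Cmod_rect_integral_near F (x, y) l Hl eps He) as [del [Hdel Hnear]].
  destruct (exists_pow2_gt s del Hdel) as [N HN].
  destruct (quarters_spec F q0 HF Hab Hcd N) as (h1 & h2 & h3 & h4 & h5 & h6 & h7).
  set (q := quarters F q0 N) in *. simpl in h1, h2, h3, h4, h5, h6, h7.
  assert (P : 0 < 2 ^ N) by (apply pow_lt; lra).
  assert (Hsq : (rb q - ra q) + (rd q - rc q) = s / 2 ^ N)
    by (rewrite h5, h6; unfold s; field; lra).
  assert (Hsmall : s / 2 ^ N < del)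
    by (apply (Rmult_lt_reg_r (2 ^ N)); [lra|]; field_simplify; lra).
  specialize (Hnear (ra q) (rb q) (rc q) (rd q) (proj1 (Hxy N)) (proj2 (Hxy N)) ltac:(lra)
    ltac:(eapply continuous_on_rect_sub; [exact HF | ..]; simpl; lra)).
  rewrite Hsq in Hnear. unfold rect_integral_of in h7. simpl in h7.
  eapply Rle_trans; [exact h7|].
  replace (eps * (4 * s ^ 2)) with (2 ^ N * 2 ^ N * (4 * eps * (s / 2 ^ N) ^ 2)) by (field; lra).
  apply Rmult_le_compat_l; [nra | exact Hnear].
Qed.

(** * Cauchy's formula and the maximum modulus principle for rectangles *)

Lemma is_cderive_inv_sub (z0 w : C) :
  w <> z0 -> is_cderive (fun u => / (u - z0))%C w (- / ((w - z0) * (w - z0))).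
Proof.
  intros Hw.
  replace (- / ((w - z0) * (w - z0)))%C with ((1 + 0) * - / ((w - z0) * (w - z0)))%C by ring.
  apply (is_cderive_comp Cinv (fun u => u - z0)%C).
  - apply (is_cderive_plus (fun u => u) (fun _ => - z0)%C);
      [apply is_cderive_id | apply is_cderive_const].
  - apply is_cderive_Cinv. intros E. apply Hw. apply Ceq_minus. exact E.
Qed.

Definition dslope (F : C -> C) (z0 l0 : C) (u : C) : C :=
  if Ceq_dec u z0 then l0 else ((F u - F z0) / (u - z0))%C.

Lemma ex_cderive_dslope F z0 l0 w : w <> z0 -> ex_cderive F w -> ex_cderive (dslope F z0 l0) w.
Proof.
  intros Hw [l Hl]. eexists.
  apply (is_cderive_ext_loc _ (fun u => (F u - F z0) * / (u - z0))%C w _ (Cmod (w - z0))).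
  - apply Cmod_sub_pos. exact Hw.
  - intros u Hu. unfold dslope. destruct (Ceq_dec u z0) as [->|]; [|reflexivity].
    replace (z0 - w)%C with (- (w - z0))%C in Hu by ring. rewrite Cmod_opp in Hu. lra.
  - apply (is_cderive_mult (fun u => F u - F z0)%C (fun u => / (u - z0))%C).
    + apply (is_cderive_plus F (fun _ => - F z0)%C); [exact Hl | apply is_cderive_const].
    + apply is_cderive_inv_sub. exact Hw.
Qed.

Lemma dslope_continuous F z0 l0 : is_cderive F z0 l0 -> Ccontinuous (dslope F z0 l0) z0.
Proof.
  intros H eps He. destruct (H (eps / 2) ltac:(lra)) as [d [Hd Hw]]. exists d. split; [exact Hd|].
  intros u Hu. unfold dslope. destruct (Ceq_dec z0 z0) as [_|]; [|congruence].
  destruct (Ceq_dec u z0) as [_|Hne].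
  - unfold Cminus. rewrite Cplus_opp_r, Cmod_0. exact He.
  - pose proof (Cmod_sub_pos u z0 Hne) as P.
    assert (Hn : (u - z0)%C <> 0%C) by (intros E; rewrite E, Cmod_0 in P; lra).
    replace ((F u - F z0) / (u - z0) - l0)%C with ((F u - F z0 - l0 * (u - z0)) / (u - z0))%C
      by (field; exact Hn).
    unfold Cdiv. rewrite Cmod_mult, Cmod_inv by exact Hn.
    apply (Rmult_lt_reg_r (Cmod (u - z0))); [exact P|].
    rewrite Rmult_assoc, Rinv_l by lra. specialize (Hw u Hu). nra.
Qed.

Lemma pair_neq (x y x0 y0 : R) : x <> x0 \/ y <> y0 -> (x, y) <> (x0, y0) :> C.
Proof. intros [H|H] E; inversion E; auto. Qed.

Lemma continuous_on_rect_dslope F a b c d z0 l0 :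
  (forall x y, a <= x <= b -> c <= y <= d -> ex_cderive F (x, y)) -> is_cderive F z0 l0 ->
  continuous_on_rect (dslope F z0 l0) a b c d.
Proof.
  intros HF H0 x y hx hy. destruct (Ceq_dec (x, y) z0) as [E|Hne].
  - rewrite E. apply dslope_continuous. exact H0.
  - apply ex_cderive_continuous, ex_cderive_dslope; auto.
Qed.

Lemma dslope_locally_bounded F z0 l0 : is_cderive F z0 l0 ->
  exists r, 0 < r /\ forall u, Cmod (u - z0) < r -> Cmod (dslope F z0 l0 u) <= Cmod l0 + 1.
Proof.
  intros H0. destruct (dslope_continuous F z0 l0 H0 1 Rlt_0_1) as [r [Hr Hq]]. exists r.
  split; [exact Hr|]. intros u Hu. specialize (Hq u Hu).
  assert (E : dslope F z0 l0 z0 = l0) by (unfold dslope; destruct (Ceq_dec z0 z0); congruence).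
  rewrite E in Hq. replace (dslope F z0 l0 u) with ((dslope F z0 l0 u - l0) + l0)%C by ring.
  eapply Rle_trans; [apply Cmod_triangle|]. lra.
Qed.

Lemma exists_margin a b c d x0 y0 : a < x0 < b -> c < y0 < d ->
  exists m, 0 < m /\ m <= x0 - a /\ m <= b - x0 /\ m <= y0 - c /\ m <= d - y0.
Proof.
  intros Hx Hy. exists (Rmin (Rmin (x0 - a) (b - x0)) (Rmin (y0 - c) (d - y0))).
  pose proof (Rmin_l (Rmin (x0 - a) (b - x0)) (Rmin (y0 - c) (d - y0))).
  pose proof (Rmin_r (Rmin (x0 - a) (b - x0)) (Rmin (y0 - c) (d - y0))).
  pose proof (Rmin_l (x0 - a) (b - x0)). pose proof (Rmin_r (x0 - a) (b - x0)).
  pose proof (Rmin_l (y0 - c) (d - y0)). pose proof (Rmin_r (y0 - c) (d - y0)).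
  repeat split; try lra. repeat apply Rmin_pos; lra.
Qed.

(* Cut the rectangle along the lines through the corners of the square; Goursat applies
   to the four pieces that avoid [(x0, y0)]. *)
Lemma rect_integral_excise F a b c d x0 y0 del :
  continuous_on_rect F a b c d ->
  (forall x y, a <= x <= b -> c <= y <= d -> x <> x0 \/ y <> y0 -> ex_cderive F (x, y)) ->
  0 < del -> a <= x0 - del -> x0 + del <= b -> c <= y0 - del -> y0 + del <= d ->
  rect_integral F a b c d = rect_integral F (x0 - del) (x0 + del) (y0 - del) (y0 + del).
Proof.
  intros HF HD Hdel ha hb hc hd.
  assert (Z : forall a' b' c' d',
            a <= a' -> a' <= b' -> b' <= b -> c <= c' -> c' <= d' -> d' <= d ->
            (b' < x0 \/ x0 < a' \/ d' < y0 \/ y0 < c') -> rect_integral F a' b' c' d' = 0%C).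
  { intros a' b' c' d' ha' hab hb' hc' hcd hd' Hout. apply goursat; auto.
    intros x y hx hy. apply HD; lra. }
  rewrite (rect_integral_split_x F a (x0 - del) b c d),
    (rect_integral_split_x F (x0 - del) (x0 + del) b c d),
    (rect_integral_split_y F (x0 - del) (x0 + del) c (y0 - del) d),
    (rect_integral_split_y F (x0 - del) (x0 + del) (y0 - del) (y0 + del) d)
    by (try (eapply continuous_on_rect_sub; [exact HF | ..]); lra).
  rewrite (Z a (x0 - del) c d), (Z (x0 + del) b c d), (Z (x0 - del) (x0 + del) c (y0 - del)),
    (Z (x0 - del) (x0 + del) (y0 + del) d) by lra.
  ring.
Qed.

Lemma rect_integral_dslope F a b c d x0 y0 l0 :
  a < x0 < b -> c < y0 < d ->
  (forall x y, a <= x <= b -> c <= y <= d -> ex_cderive F (x, y)) ->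
  is_cderive F (x0, y0) l0 ->
  rect_integral (dslope F (x0, y0) l0) a b c d = 0%C.
Proof.
  intros Hx Hy HF H0. set (q := dslope F (x0, y0) l0). set (M := Cmod l0 + 1).
  destruct (dslope_locally_bounded F (x0, y0) l0 H0) as [r [Hr HqM]]. fold q M in HqM.
  destruct (exists_margin a b c d x0 y0 Hx Hy) as (m & Hm & m1 & m2 & m3 & m4).
  assert (Cq : continuous_on_rect q a b c d) by (apply continuous_on_rect_dslope; auto).
  apply (Cmod_eq_0_of_le_eps _ (16 * M)); [unfold M; pose proof (Cmod_ge_0 l0); lra|].
  intros eps He. set (del := Rmin (Rmin eps (r / 4)) m).
  assert (Hdel : 0 < del) by (apply Rmin_pos; [apply Rmin_pos|]; lra).
  assert (del <= Rmin eps (r / 4) /\ del <= m) as [h1 h2] by (split; [apply Rmin_l | apply Rmin_r]).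
  pose proof (Rmin_l eps (r / 4)). pose proof (Rmin_r eps (r / 4)).
  rewrite (rect_integral_excise q a b c d x0 y0 del Cq) by
    (try (intros; apply ex_cderive_dslope; [apply pair_neq | apply HF]); auto; lra).
  assert (Hsq : forall x y, x0 - del <= x <= x0 + del -> y0 - del <= y <= y0 + del ->
                  Cmod (q (x, y)) <= M).
  { intros x y hx hy. apply HqM. rewrite Cminus_pair. eapply Rle_lt_trans; [apply Cmod_le_Re_Im|].
    simpl. unfold Rabs; repeat destruct Rcase_abs; lra. }
  eapply Rle_trans; [apply Cmod_rect_integral_le with (M := M); try lra|].
  - apply continuous_on_rect_boundary_of; try lra.
    eapply continuous_on_rect_sub; [exact Cq | ..]; lra.
  - intros x hx. split; apply Hsq; lra.
  - intros y hy. split; apply Hsq; lra.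
  - assert (0 <= M) by (unfold M; pose proof (Cmod_ge_0 l0); lra). nra.
Qed.

Lemma continuous_on_rect_boundary_inv_sub a b c d x0 y0 :
  a < x0 < b -> c < y0 < d -> continuous_on_rect_boundary (fun w => / (w - (x0, y0)))%C a b c d.
Proof.
  intros Hx Hy.
  assert (H : forall x y, x <> x0 \/ y <> y0 -> Ccontinuous (fun w => / (w - (x0, y0)))%C (x, y))
    by (intros x y Hne; eapply is_cderive_continuous, is_cderive_inv_sub, pair_neq, Hne).
  split; intros t Ht; split; apply H; lra.
Qed.

Theorem cauchy_rect F a b c d x0 y0 :
  a < x0 < b -> c < y0 < d ->
  (forall x y, a <= x <= b -> c <= y <= d -> ex_cderive F (x, y)) ->
  rect_integral (fun w => F w / (w - (x0, y0)))%C a b c d =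
  (F (x0, y0) * rect_integral (fun w => / (w - (x0, y0)))%C a b c d)%C.
Proof.
  intros Hx Hy HF. set (z0 := (x0, y0) : C).
  destruct (HF x0 y0) as [l0 H0]; try lra.
  assert (E : forall x y, x <> x0 \/ y <> y0 ->
            (F (x, y) / ((x, y) - z0) = dslope F z0 l0 (x, y) + F z0 * / ((x, y) - z0))%C).
  { intros x y Hne. unfold dslope.
    destruct (Ceq_dec (x, y) z0) as [e|_]; [exfalso; exact (pair_neq _ _ _ _ Hne e)|].
    field. apply Cminus_eq_contra, pair_neq, Hne. }
  rewrite (rect_integral_ext _ (fun w => dslope F z0 l0 w + F z0 * / (w - z0))%C)
    by (try (intros t Ht; split; apply E); lra).
  rewrite rect_integral_lincomb; try lra.
  - unfold z0. rewrite rect_integral_dslope by auto. ring.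
  - apply continuous_on_rect_boundary_of; try lra. apply continuous_on_rect_dslope; auto.
  - apply continuous_on_rect_boundary_inv_sub; auto.
Qed.

Lemma Im_rect_integral F a b c d :
  Im (rect_integral F a b c d) =
  RInt (fun x => Im (F (x, c) - F (x, d))) a b + RInt (fun y => Re (F (b, y) - F (a, y))) c d.
Proof. unfold rect_integral, CInt, Cplus, Cmult, Ci, Re, Im; simpl. ring. Qed.

Lemma Re_Cinv (u v : R) : Re (/ (u, v))%C = u / (u ^ 2 + v ^ 2).
Proof. reflexivity. Qed.

Lemma Im_Cinv (u v : R) : Im (/ (u, v))%C = - v / (u ^ 2 + v ^ 2).
Proof. reflexivity. Qed.

Lemma Im_inv_sub_bottom_top_ge x x0 y0 c d K :
  c < y0 < d -> (x - x0) ^ 2 + (c - y0) ^ 2 <= K ->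
  (y0 - c) / K <= Im (/ ((x, c) - (x0, y0)) - / ((x, d) - (x0, y0)))%C.
Proof.
  intros Hy HK. rewrite Im_sub, !Cminus_pair, !Im_Cinv.
  pose proof (pow2_ge_0 (x - x0)).
  assert (0 < (c - y0) ^ 2)
    by (replace ((c - y0) ^ 2) with ((y0 - c) ^ 2) by ring; apply pow_lt; lra).
  assert (0 < (d - y0) ^ 2) by (apply pow_lt; lra).
  assert ((y0 - c) / K <= - (c - y0) / ((x - x0) ^ 2 + (c - y0) ^ 2)).
  { unfold Rdiv. replace (- (c - y0)) with (y0 - c) by ring.
    apply Rmult_le_compat_l; [lra | apply Rinv_le_contravar; lra]. }
  assert (0 <= (d - y0) / ((x - x0) ^ 2 + (d - y0) ^ 2)) by (apply Rdiv_le_0_compat; lra).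
  unfold Rdiv in *. lra.
Qed.

Lemma Re_inv_sub_right_left_ge y a b x0 y0 :
  a < x0 < b -> 0 <= Re (/ ((b, y) - (x0, y0)) - / ((a, y) - (x0, y0)))%C.
Proof.
  intros Hx. rewrite Re_sub, !Cminus_pair, !Re_Cinv.
  pose proof (pow2_ge_0 (y - y0)).
  assert (0 < (b - x0) ^ 2) by (apply pow_lt; lra).
  assert (0 < (a - x0) ^ 2)
    by (replace ((a - x0) ^ 2) with ((x0 - a) ^ 2) by ring; apply pow_lt; lra).
  assert (0 <= (b - x0) / ((b - x0) ^ 2 + (y - y0) ^ 2)) by (apply Rdiv_le_0_compat; lra).
  assert (0 <= (x0 - a) / ((a - x0) ^ 2 + (y - y0) ^ 2)) by (apply Rdiv_le_0_compat; lra).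
  replace ((a - x0) / ((a - x0) ^ 2 + (y - y0) ^ 2))
    with (- ((x0 - a) / ((a - x0) ^ 2 + (y - y0) ^ 2))) by (unfold Rdiv; ring).
  lra.
Qed.

(* The winding number of the boundary around an interior point is nonzero. *)
Lemma Im_rect_integral_inv_sub_pos a b c d x0 y0 :
  a < x0 < b -> c < y0 < d -> 0 < Im (rect_integral (fun w => / (w - (x0, y0)))%C a b c d).
Proof.
  intros Hx Hy.
  destruct (ex_CInt_rect_edges (fun w => / (w - (x0, y0)))%C a b c d) as [[_ I1] [I2 _]];
    [apply continuous_on_rect_boundary_inv_sub; auto | lra | lra |].
  rewrite Im_rect_integral.
  set (K := (b - a) ^ 2 + (d - c) ^ 2 + 1).
  assert (HK : 0 < K)
    by (unfold K; pose proof (pow2_ge_0 (b - a)); pose proof (pow2_ge_0 (d - c)); lra).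
  assert (H1 : (b - a) * ((y0 - c) / K) <=
               RInt (fun x => Im (/ ((x, c) - (x0, y0)) - / ((x, d) - (x0, y0))))%C a b).
  { rewrite <- (RInt_const (V := R_CompleteNormedModule)).
    apply RInt_le; [lra | apply ex_RInt_const | exact I1 |].
    intros x hx. apply Im_inv_sub_bottom_top_ge; [lra|]. unfold K.
    assert ((x - x0) ^ 2 <= (b - a) ^ 2)
      by (apply pow_maj_Rabs; unfold Rabs; destruct Rcase_abs; lra).
    assert ((c - y0) ^ 2 <= (d - c) ^ 2)
      by (apply pow_maj_Rabs; unfold Rabs; destruct Rcase_abs; lra).
    lra. }
  assert (H2 : 0 <= RInt (fun y => Re (/ ((b, y) - (x0, y0)) - / ((a, y) - (x0, y0))))%C c d)
    by (apply RInt_ge_0; [lra | exact I2 | intros y hy; apply Re_inv_sub_right_left_ge; lra]).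
  assert (0 < (b - a) * ((y0 - c) / K))
    by (apply Rmult_lt_0_compat; [|apply Rdiv_lt_0_compat]; lra).
  lra.
Qed.

Lemma le_1_of_pow_bounded (t W K : R) : 0 < W -> (forall n, t ^ n * W <= K) -> t <= 1.
Proof.
  intros HW Hb. destruct (Rle_or_lt t 1) as [|Ht]; [assumption|exfalso].
  destruct (INR_archimed ((t - 1) * W) K) as [n Hn]; [apply Rmult_lt_0_compat; lra|].
  pose proof (Rle_pow_lin (t - 1) n ltac:(lra)) as Hpow.
  replace (1 + (t - 1)) with t in Hpow by ring.
  specialize (Hb n). pose proof (pos_INR n). nra.
Qed.

Lemma ex_cderive_pow F z (n : nat) : ex_cderive F z -> ex_cderive (fun w => F w ^ n)%C z.
Proof.
  intros [l Hl]. induction n as [|n [ln IH]].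
  - exists 0%C. exact (is_cderive_const 1 z).
  - eexists. exact (is_cderive_mult F (fun w => F w ^ n)%C z _ _ Hl IH).
Qed.

Lemma Cmod_cauchy_estimate F a b c d x0 y0 m M :
  a < x0 < b -> c < y0 < d ->
  (forall x y, a <= x <= b -> c <= y <= d -> ex_cderive F (x, y)) ->
  0 < m -> m <= x0 - a -> m <= b - x0 -> m <= y0 - c -> m <= d - y0 ->
  (forall x, a <= x <= b -> Cmod (F (x, c)) <= M /\ Cmod (F (x, d)) <= M) ->
  (forall y, c <= y <= d -> Cmod (F (a, y)) <= M /\ Cmod (F (b, y)) <= M) ->
  Cmod (F (x0, y0)) * Cmod (rect_integral (fun w => / (w - (x0, y0)))%C a b c d)
    <= 4 * (M / m) * ((b - a) + (d - c)).
Proof.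
  intros Hx Hy HF Hm m1 m2 m3 m4 B1 B2.
  rewrite <- Cmod_mult, <- cauchy_rect by auto. set (z0 := (x0, y0) : C).
  assert (Hbd : forall x y, a <= x <= b -> c <= y <= d -> (x, y) <> z0 ->
                  Ccontinuous (fun w => F w / (w - z0))%C (x, y)).
  { intros x y hx hy Hne. apply ex_cderive_continuous.
    destruct (HF x y hx hy) as [l Hl]. eexists.
    apply (is_cderive_mult F (fun w => / (w - z0))%C); [exact Hl | apply is_cderive_inv_sub, Hne]. }
  assert (Hquot : forall x y, Cmod (F (x, y)) <= M -> m <= Rabs (x - x0) \/ m <= Rabs (y - y0) ->
                    Cmod (F (x, y) / ((x, y) - z0)) <= M / m).
  { intros x y h1 h2. unfold z0. rewrite Cminus_pair.
    assert (Hd : m <= Cmod (x - x0, y - y0))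
      by (destruct h2; eapply Rle_trans; [eassumption | exact (re_le_Cmod (x - x0, y - y0))
                                          | eassumption | exact (im_le_Cmod (x - x0, y - y0))]).
    assert (Hn : (x - x0, y - y0) <> RtoC 0) by (intros E; rewrite E, Cmod_0 in Hd; lra).
    unfold Cdiv, Rdiv. rewrite Cmod_mult, Cmod_inv by exact Hn.
    assert (/ Cmod (x - x0, y - y0) <= / m) by (apply Rinv_le_contravar; lra).
    pose proof (Rinv_0_lt_compat _ (Rlt_le_trans _ _ _ Hm Hd)).
    pose proof (Cmod_ge_0 (F (x, y))). nra. }
  apply Cmod_rect_integral_le; try lra.
  - split; intros t ht; split; apply Hbd; try lra; apply pair_neq; lra.
  - intros x hx. destruct (B1 x hx). split; apply Hquot; auto; right;
      unfold Rabs; destruct Rcase_abs; lra.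
  - intros y hy. destruct (B2 y hy). split; apply Hquot; auto; left;
      unfold Rabs; destruct Rcase_abs; lra.
Qed.

(* Cauchy's estimate for [F ^ n]: [|F z0| ^ n] stays bounded, so [|F z0| <= 1]. *)
Lemma rect_maximum_modulus_interior F a b c d x0 y0 :
  a < x0 < b -> c < y0 < d ->
  (forall x y, a <= x <= b -> c <= y <= d -> ex_cderive F (x, y)) ->
  (forall x, a <= x <= b -> Cmod (F (x, c)) <= 1 /\ Cmod (F (x, d)) <= 1) ->
  (forall y, c <= y <= d -> Cmod (F (a, y)) <= 1 /\ Cmod (F (b, y)) <= 1) ->
  Cmod (F (x0, y0)) <= 1.
Proof.
  intros Hx Hy HF B1 B2.
  destruct (exists_margin a b c d x0 y0 Hx Hy) as (m & Hm & m1 & m2 & m3 & m4).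
  set (W := rect_integral (fun w => / (w - (x0, y0)))%C a b c d).
  assert (HW : 0 < Cmod W).
  { pose proof (Im_rect_integral_inv_sub_pos a b c d x0 y0 Hx Hy). pose proof (im_le_Cmod W).
    pose proof (Rle_abs (Im W)). fold W in H. lra. }
  assert (Hpow : forall n u, Cmod u <= 1 -> Cmod (u ^ n) <= 1)
    by (intros n u Hu; rewrite Cmod_pow, <- (pow1 n); apply pow_incr;
        split; [apply Cmod_ge_0 | exact Hu]).
  apply (le_1_of_pow_bounded _ (Cmod W) (4 * (1 / m) * ((b - a) + (d - c)))); [exact HW|]. intros n.
  rewrite <- Cmod_pow.
  apply (Cmod_cauchy_estimate (fun w => F w ^ n)%C); auto.
  - intros x y hx hy. apply ex_cderive_pow, HF; auto.
  - intros x hx. destruct (B1 x hx). split; apply Hpow; assumption.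
  - intros y hy. destruct (B2 y hy). split; apply Hpow; assumption.
Qed.

Theorem rect_maximum_modulus F a b c d :
  (forall x y, a <= x <= b -> c <= y <= d -> ex_cderive F (x, y)) ->
  (forall x, a <= x <= b -> Cmod (F (x, c)) <= 1 /\ Cmod (F (x, d)) <= 1) ->
  (forall y, c <= y <= d -> Cmod (F (a, y)) <= 1 /\ Cmod (F (b, y)) <= 1) ->
  forall x y, a <= x <= b -> c <= y <= d -> Cmod (F (x, y)) <= 1.
Proof.
  intros HF B1 B2 x y [hx1 hx2] [hy1 hy2].
  destruct hx1 as [hx1|E]; [|subst x; apply B2; lra].
  destruct hx2 as [hx2|E]; [|subst x; apply B2; lra].
  destruct hy1 as [hy1|E]; [|subst y; apply B1; lra].
  destruct hy2 as [hy2|E]; [|subst y; apply B1; lra].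
  apply (rect_maximum_modulus_interior F a b c d); auto.
Qed.

(** * The half annulus in logarithmic coordinates *)

Lemma cexp_Omega Rr s t : 1 < Rr -> 0 <= s <= ln Rr -> 0 <= t <= PI -> Omega Rr (cexp (s, t)).
Proof.
  intros HR Hs Ht. unfold Omega. rewrite Cmod_cexp. simpl. split; [split|].
  - rewrite <- exp_0. apply exp_le_compat. lra.
  - rewrite <- (exp_ln Rr) by lra. apply exp_le_compat. lra.
  - apply Rmult_le_pos; [left; apply exp_pos | apply sin_ge_0; lra].
Qed.

Lemma cexp_polar (z : C) : 0 < Cmod z -> 0 <= Im z ->
  exists t, 0 <= t <= PI /\ z = cexp (ln (Cmod z), t).
Proof.
  destruct z as [x y]. simpl. intros Hr Hy. set (r := Cmod (x, y)) in *.
  pose proof (Cmod2_alt (x, y)) as Hxy. fold r in Hxy. simpl in Hxy.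
  assert (Hxr : -1 <= x / r <= 1).
  { pose proof (re_le_Cmod (x, y)) as Hre. fold r in Hre. simpl in Hre.
    apply Rabs_le_between in Hre.
    split; apply (Rmult_le_reg_r r); try lra; unfold Rdiv; rewrite Rmult_assoc, Rinv_l; lra. }
  exists (acos (x / r)). split; [apply acos_bound|].
  unfold cexp; simpl. rewrite exp_ln, cos_acos, sin_acos by auto.
  replace (1 - (x / r)²) with ((y / r) ^ 2) by (unfold Rsqr; field_simplify_eq; [nra | lra]).
  rewrite sqrt_pow2 by (apply Rdiv_le_0_compat; lra).
  f_equal; field; lra.
Qed.

Lemma cayley_bounds (u : C) (A : R) : 0 < A -> Re u <= A ->
  A <= Cmod (RtoC (2 * A) - u) /\ Cmod u <= Cmod (RtoC (2 * A) - u).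
Proof.
  intros HA Hu. split.
  - eapply Rle_trans; [|apply re_le_Cmod]. rewrite Re_sub. simpl.
    unfold Rabs; destruct Rcase_abs; lra.
  - destruct u as [u1 u2]. simpl in Hu. unfold Cmod. apply sqrt_le_1_alt. simpl. nra.
Qed.

(* Inverting [h = u / (2A - u)]: [|u| = |h| |2A - u| <= tau (2A + |u|)]. *)
Lemma Cmod_le_of_cayley_le (u : C) (A tau : R) :
  0 < A -> Re u <= A -> tau < 1 ->
  Cmod (u / (RtoC (2 * A) - u)) <= tau -> Cmod u <= 2 * A * tau / (1 - tau).
Proof.
  intros HA Hu Htau Hh. destruct (cayley_bounds u A HA Hu) as [B1 _].
  set (v := (RtoC (2 * A) - u)%C) in *.
  assert (Hv : v <> 0%C) by (intros E; rewrite E, Cmod_0 in B1; lra).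
  unfold Cdiv in Hh. rewrite Cmod_mult, Cmod_inv in Hh by exact Hv.
  assert (Hu' : Cmod u <= tau * Cmod v).
  { apply (Rmult_le_reg_r (/ Cmod v)); [apply Rinv_0_lt_compat; lra|].
    rewrite Rmult_assoc, Rinv_r by lra. lra. }
  assert (Hv' : Cmod v <= 2 * A + Cmod u).
  { unfold v, Cminus. eapply Rle_trans; [apply Cmod_triangle|].
    rewrite Cmod_opp, Cmod_R, Rabs_pos_eq by lra. lra. }
  pose proof (Cmod_ge_0 u). pose proof (Cmod_ge_0 v).
  assert (0 <= tau).
  { eapply Rle_trans; [|exact Hh].
    apply Rmult_le_pos; [apply Cmod_ge_0 | left; apply Rinv_0_lt_compat; lra]. }
  apply (Rmult_le_reg_r (1 - tau)); [lra|]. unfold Rdiv. rewrite Rmult_assoc, Rinv_l by lra. nra.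
Qed.

(** * Borel-Caratheodory on the half annulus *)

Section HalfAnnulus.

Variables (Rr rho A : R) (f : C -> C).
Hypotheses (HR : 1 < Rr) (Hrho : 0 < rho) (HA : 0 < A)
  (Hf : forall z, Omega Rr z -> ex_cderive f z)
  (Hre : forall z, Omega Rr z -> Re (f z) <= A)
  (Hreal : forall x : R, Omega Rr (RtoC x) ->
     Cmod (f (RtoC x)) * Rpower Rr rho <= A * Rpower (Rabs x) rho)
  (Hunit : forall z, Omega Rr z -> Cmod z = 1 -> Cmod (f z) * Rpower Rr rho <= A).

Let h (z : C) : C := (f z / (RtoC (2 * A) - f z))%C.

Lemma h_bounds z : Omega Rr z ->
  Cmod (h z) <= 1 /\ Cmod (h z) * A <= Cmod (f z) /\ (RtoC (2 * A) - f z)%C <> 0%C.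
Proof.
  intros Hz. destruct (cayley_bounds (f z) A HA (Hre z Hz)) as [B1 B2].
  assert (NZ : (RtoC (2 * A) - f z)%C <> 0%C) by (intros E; rewrite E, Cmod_0 in B1; lra).
  unfold h, Cdiv. rewrite Cmod_mult, Cmod_inv by exact NZ.
  assert (P : 0 < / Cmod (RtoC (2 * A) - f z)) by (apply Rinv_0_lt_compat; lra).
  split; [|split; [|exact NZ]].
  - apply (Rmult_le_reg_r (Cmod (RtoC (2 * A) - f z))); [lra|]. rewrite Rmult_assoc, Rinv_l; lra.
  - assert (A * / Cmod (RtoC (2 * A) - f z) <= 1).
    { apply (Rmult_le_reg_r (Cmod (RtoC (2 * A) - f z))); [lra|].
      rewrite Rmult_assoc, Rinv_l; lra. }
    pose proof (Cmod_ge_0 (f z)). nra.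
Qed.

Let G (w : C) : C := (h (cexp w) * cexp (RtoC rho * (RtoC (ln Rr) - w)))%C.

Lemma Cmod_G s t : Cmod (G (s, t)) = Cmod (h (cexp (s, t))) * (Rpower Rr rho / exp (rho * s)).
Proof.
  unfold G. rewrite Cmod_mult, Cmod_cexp. f_equal.
  unfold Rpower, Rdiv. rewrite <- exp_Ropp, <- exp_plus.
  f_equal. simpl. ring.
Qed.

Lemma ex_cderive_G x y : 0 <= x <= ln Rr -> 0 <= y <= PI -> ex_cderive G (x, y).
Proof.
  intros hx hy. pose proof (cexp_Omega Rr x y HR hx hy) as HO.
  destruct (Hf _ HO) as [lf Hlf]. destruct (h_bounds _ HO) as (_ & _ & NZ).
  assert (Dfe : is_cderive (fun w => f (cexp w)) (x, y) (cexp (x, y) * lf))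
    by (apply (is_cderive_comp f cexp); [apply is_cderive_cexp | exact Hlf]).
  eexists. unfold G, h, Cdiv.
  apply (is_cderive_mult (fun w => f (cexp w) * / (RtoC (2 * A) - f (cexp w)))%C).
  - apply (is_cderive_mult (fun w => f (cexp w))); [exact Dfe|].
    apply (is_cderive_comp Cinv (fun w => RtoC (2 * A) - f (cexp w))%C);
      [|apply is_cderive_Cinv, NZ].
    apply (is_cderive_plus (fun _ => RtoC (2 * A)));
      [apply is_cderive_const | apply is_cderive_opp, Dfe].
  - apply (is_cderive_comp cexp (fun w => RtoC rho * (RtoC (ln Rr) - w))%C);
      [|apply is_cderive_cexp].
    apply (is_cderive_mult (fun _ => RtoC rho)); [apply is_cderive_const|].
    apply (is_cderive_plus (fun _ => RtoC (ln Rr)));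
      [apply is_cderive_const | apply is_cderive_opp, is_cderive_id].
Qed.

Lemma G_le_1_of s t : 0 <= s <= ln Rr -> 0 <= t <= PI ->
  Cmod (f (cexp (s, t))) * Rpower Rr rho <= A * exp (rho * s) -> Cmod (G (s, t)) <= 1.
Proof.
  intros hs ht Hft. rewrite Cmod_G.
  destruct (h_bounds _ (cexp_Omega Rr s t HR hs ht)) as (_ & H2 & _).
  pose proof (exp_pos (rho * s)). pose proof (exp_pos (rho * ln Rr)).
  unfold Rdiv. apply (Rmult_le_reg_r (exp (rho * s) * A)); [nra|].
  replace (Cmod (h (cexp (s, t))) * (Rpower Rr rho * / exp (rho * s)) * (exp (rho * s) * A))
    with (Cmod (h (cexp (s, t))) * A * Rpower Rr rho) by (field; lra).
  unfold Rpower in *. nra.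
Qed.

Lemma G_le_1_boundary :
  (forall s, 0 <= s <= ln Rr -> Cmod (G (s, 0)) <= 1 /\ Cmod (G (s, PI)) <= 1) /\
  (forall t, 0 <= t <= PI -> Cmod (G (0, t)) <= 1 /\ Cmod (G (ln Rr, t)) <= 1).
Proof.
  pose proof PI_RGT_0. assert (HlnR : 0 < ln Rr) by (rewrite <- ln_1; apply ln_increasing; lra).
  split.
  - intros s hs. split; apply G_le_1_of; try lra.
    + assert (E : cexp (s, 0) = RtoC (exp s))
        by (unfold cexp, RtoC; simpl; rewrite cos_0, sin_0; f_equal; ring).
      pose proof (cexp_Omega Rr s 0 HR hs ltac:(lra)) as HO. rewrite E in HO |- *.
      eapply Rle_trans; [apply Hreal, HO|]. unfold Rpower.
      rewrite Rabs_pos_eq, ln_exp by (left; apply exp_pos). lra.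
    + assert (E : cexp (s, PI) = RtoC (- exp s))
        by (unfold cexp, RtoC; simpl; rewrite cos_PI, sin_PI; f_equal; ring).
      pose proof (cexp_Omega Rr s PI HR hs ltac:(lra)) as HO. rewrite E in HO |- *.
      eapply Rle_trans; [apply Hreal, HO|]. unfold Rpower.
      rewrite Rabs_Ropp, Rabs_pos_eq, ln_exp by (left; apply exp_pos). lra.
  - intros t ht. split.
    + apply G_le_1_of; try lra.
      rewrite Rmult_0_r, exp_0, Rmult_1_r. apply Hunit; [apply cexp_Omega; lra|].
      rewrite Cmod_cexp. apply exp_0.
    + rewrite Cmod_G. unfold Rpower. rewrite Rdiv_diag by (apply Rgt_not_eq, exp_pos).
      rewrite Rmult_1_r. apply h_bounds, cexp_Omega; lra.
Qed.

Lemma Cmod_h_le z : Omega Rr z -> 1 < Cmod z < Rr ->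
  Cmod (h z) <= Rpower (Cmod z) rho / Rpower Rr rho.
Proof.
  intros Hz Hr. destruct (cexp_polar z ltac:(lra) (proj2 Hz)) as [t [Ht Ez]].
  assert (Hs : 0 <= ln (Cmod z) <= ln Rr)
    by (split; [rewrite <- ln_1|]; left; apply ln_increasing; lra).
  destruct G_le_1_boundary as [B1 B2].
  pose proof (rect_maximum_modulus G 0 (ln Rr) 0 PI ex_cderive_G B1 B2
    (ln (Cmod z)) t Hs Ht) as HG.
  rewrite Cmod_G, <- Ez in HG. unfold Rpower in *.
  pose proof (exp_pos (rho * ln (Cmod z))). pose proof (exp_pos (rho * ln Rr)).
  apply (Rmult_le_reg_r (exp (rho * ln Rr) / exp (rho * ln (Cmod z))));
    [apply Rdiv_lt_0_compat; lra|].
  replace (exp (rho * ln (Cmod z)) / exp (rho * ln Rr) *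
           (exp (rho * ln Rr) / exp (rho * ln (Cmod z))))
    with 1 by (field; lra).
  exact HG.
Qed.

Lemma Cmod_f_le z : Omega Rr z -> 1 < Cmod z < Rr ->
  Cmod (f z) <= 2 * Rpower (Cmod z) rho / (Rpower Rr rho - Rpower (Cmod z) rho) * A.
Proof.
  intros Hz Hr. set (tau := Rpower (Cmod z) rho / Rpower Rr rho).
  assert (Hlt : Rpower (Cmod z) rho < Rpower Rr rho)
    by (unfold Rpower; apply exp_increasing, Rmult_lt_compat_l, ln_increasing; lra).
  assert (Hpos : 0 < Rpower Rr rho) by apply exp_pos.
  assert (Htau : tau < 1) by (unfold tau; apply (Rmult_lt_reg_r (Rpower Rr rho)); [lra|];
    unfold Rdiv; rewrite Rmult_assoc, Rinv_l; lra).
  replace (2 * Rpower (Cmod z) rho / (Rpower Rr rho - Rpower (Cmod z) rho) * A)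
    with (2 * A * tau / (1 - tau)) by (unfold tau; field; lra).
  apply Cmod_le_of_cayley_le; auto. exact (Cmod_h_le z Hz Hr).
Qed.

End HalfAnnulus.

Theorem lemma2p1 (Rr : R) (f : C -> C) (rho C0 M Mre : R) :
  1 < Rr ->
  analytic_near f (Omega Rr) ->
  0 < rho -> 0 < C0 ->
  (forall x : R, Omega Rr (RtoC x) -> Cmod (f (RtoC x)) <= C0 * Rpower (Rabs x) rho) ->
  is_max_on (fun z => Omega Rr z /\ Cmod z = 1) (fun z => Cmod (f z)) M ->
  is_max_on (Omega Rr) (fun z => Re (f z)) Mre ->
  forall (r : R) (z : C), 1 < r < Rr -> Omega Rr z -> Cmod z = r ->
    Cmod (f z) <=
      2 * Rpower r rho / (Rpower Rr rho - Rpower r rho) *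
      Rmax (C0 * Rpower Rr rho) (Rmax (M * Rpower Rr rho) Mre).
Proof.
  intros HR [U [_ [HSU HUd]]] Hrho HC0 Hreal [_ HM] [_ HMre] r z Hr Hz Hzr.
  set (A := Rmax (C0 * Rpower Rr rho) (Rmax (M * Rpower Rr rho) Mre)).
  assert (HA1 : C0 * Rpower Rr rho <= A) by apply Rmax_l.
  assert (HA2 : M * Rpower Rr rho <= A) by (eapply Rle_trans; [apply Rmax_l | apply Rmax_r]).
  assert (HA3 : Mre <= A) by (eapply Rle_trans; [apply Rmax_r | apply Rmax_r]).
  assert (HRp : 0 < Rpower Rr rho) by apply exp_pos.
  subst r. apply (Cmod_f_le Rr rho A f); auto.
  - pose proof (Rmult_lt_0_compat _ _ HC0 HRp). lra.
  - intros w Hw. apply ex_cderive_of_C_differentiable, HUd, HSU, Hw.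
  - intros w Hw. specialize (HMre w Hw). simpl in HMre. lra.
  - intros x Hx. pose proof (Hreal x Hx). pose proof (exp_pos (rho * ln (Rabs x))).
    unfold Rpower in *. nra.
  - intros w Hw Hw1. specialize (HM w (conj Hw Hw1)). simpl in HM. nra.
Qed.
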